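(* Let $a_1,a_2\in\mathbb{R}$ with $a_1^2+4a_2>0$, and assume either $a_1<0$ and $a_2<0$, or $a_2>0$ and $a_1+a_2<1$. Let $X$ be the AR(2)-process with these coefficients and $s_2:=(a_1-\sqrt{a_1^2+4a_2})/2$. Then $s_2<0$, $-a_2/s_2<1$, and $Z_n:=X_n-s_2X_{n-1}$ satisfies $Z_n=(-a_2/s_2)Z_{n-1}+Y_n$ for $n\ge1$. In particular, for all $x\ge0$ and $N\ge1$, $$\mathbb{P}\Big(\sup_{n=1,\dots,N}X_n\le x\Big)\le\mathbb{P}\Big(\sup_{n=1,\dots,N}Z_n\le(1-s_2)x\Big).$$
   Context: Let $(Y_n)_{n\ge1}$ be i.i.d. nondegenerate real random variables. The AR(2)-process is $X_n=a_1X_{n-1}+a_2X_{n-2}+Y_n$ for $n\ge1$ with $X_n=0$ for $n\le0$. *)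

From Stdlib Require Import Reals Lra List.
Open Scope R_scope.

(* A probability space: a sigma-algebra [meas] of events on [Omega] and a
   countably additive probability [prob] (values on non-events are irrelevant). *)
Record ProbSpace := {
  Omega : Type;
  meas : (Omega -> Prop) -> Prop;
  meas_full : meas (fun _ => True);
  meas_compl : forall A, meas A -> meas (fun w => ~ A w);
  meas_countable_union : forall A : nat -> Omega -> Prop,
      (forall n, meas (A n)) -> meas (fun w => exists n, A n w);
  prob : (Omega -> Prop) -> R;
  prob_nonneg : forall A, meas A -> 0 <= prob A;
  prob_full : prob (fun _ => True) = 1;
  prob_sigma_additive : forall A : nat -> Omega -> Prop,
      (forall n, meas (A n)) ->
      (forall i j w, i <> j -> A i w -> A j w -> False) ->
      infinite_sum (fun n => prob (A n)) (prob (fun w => exists n, A n w))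
}.

(* A real random variable: Borel measurable, i.e. all sets {X <= t} are events. *)
Definition random_variable (P : ProbSpace) (X : Omega P -> R) : Prop :=
  forall t, meas P (fun w => X w <= t).

Definition iid_nondegenerate (P : ProbSpace) (Y : nat -> Omega P -> R) : Prop :=
  (forall n, (1 <= n)%nat -> random_variable P (Y n)) /\
  (* mutual independence: joint CDFs of finitely many distinct indices factor *)
  (forall (l : list nat) (t : nat -> R),
      NoDup l -> Forall (fun i => (1 <= i)%nat) l ->
      prob P (fun w => Forall (fun i => Y i w <= t i) l)
      = fold_right (fun i acc => prob P (fun w => Y i w <= t i) * acc) 1 l) /\
  (forall n t, (1 <= n)%nat ->
      prob P (fun w => Y n w <= t) = prob P (fun w => Y 1%nat w <= t)) /\
  ~ (exists c, prob P (fun w => Y 1%nat w = c) = 1).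

(* AR(2) recursion: ar2_pair n = (X_n, X_{n-1}), with X_n = 0 for n <= 0 and
   X_n = a1 X_{n-1} + a2 X_{n-2} + y n for n >= 1. *)
Fixpoint ar2_pair (a1 a2 : R) (y : nat -> R) (n : nat) : R * R :=
  match n with
  | O => (0, 0)
  | S m => let (p, q) := ar2_pair a1 a2 y m in (a1 * p + a2 * q + y (S m), p)
  end.

Definition ar2 (a1 a2 : R) (y : nat -> R) (n : nat) : R := fst (ar2_pair a1 a2 y n).

From Stdlib Require Import Reals Lra List.
From Stdlib Require Import Lia ZArith Classical FunctionalExtensionality PropExtensionality.
Open Scope R_scope.

(* Write D := a1^2 + 4 a2 > 0 and let s1, s2 := (a1 +- sqrt D)/2 be
   the two real roots of the characteristic polynomial t^2 - a1 t - a2, so that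
   s1 + s2 = a1 and s1 s2 = -a2.  Then
     (1) -a2/s2 = s1, and in either parameter region s2 < 0 and s1 < 1;
     (2) Z_n = X_n - s2 X_{n-1} obeys Z_n = s1 Z_{n-1} + Y_n (pure algebra on
         the recursion X_{m+1} = a1 X_m + a2 X_{m-1} + Y_{m+1});
     (3) pointwise, if X_1..X_N <= x with x >= 0 then, as X_0 = 0 and -s2 > 0,
         Z_n <= x - s2 x = (1 - s2) x for n = 1..N.
   The probability bound follows from (3) by monotonicity of [prob], once both
   events are known to be measurable. *)

Lemma pred_ext {T : Type} (A B : T -> Prop) : (forall w, A w <-> B w) -> A = B.
Proof.
  intro H; apply functional_extensionality; intro w.
  apply propositional_extensionality; apply H.
Qed.

Lemma cv_eventually_const (u : nat -> R) (k : nat) (c l : R) :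
  Un_cv u l -> (forall n, (k <= n)%nat -> u n = c) -> l = c.
Proof.
  intros Hl Hc.
  assert (Hshift : Un_cv (fun n => u (n + k)%nat) c).
  { intros eps Heps; exists O; intros n _.
    rewrite Hc by lia; unfold Rdist; rewrite Rminus_diag, Rabs_R0; lra. }
  exact (UL_sequence u l c Hl (CV_shift u k c Hshift)).
Qed.

Section Events.
Variable P : ProbSpace.

Lemma meas_ext (A B : Omega P -> Prop) :
  (forall w, A w <-> B w) -> meas P A -> meas P B.
Proof. intro H; now rewrite (pred_ext A B H). Qed.

Lemma prob_ext (A B : Omega P -> Prop) :
  (forall w, A w <-> B w) -> prob P A = prob P B.
Proof. intro H; now rewrite (pred_ext A B H). Qed.

Lemma meas_empty : meas P (fun _ => False).
Proof. apply (meas_ext (fun _ => ~ True)); [tauto | apply meas_compl, meas_full]. Qed.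

(* A binary union is the countable union of the sequence A, B, B, B, ... *)
Lemma meas_union (A B : Omega P -> Prop) :
  meas P A -> meas P B -> meas P (fun w => A w \/ B w).
Proof.
  intros HA HB.
  apply (meas_ext (fun w => exists n : nat, (match n with O => A | _ => B end) w)).
  - intro w; split.
    + intros [[|n] H]; auto.
    + intros [H | H]; [exists O | exists 1%nat]; auto.
  - apply meas_countable_union; intros [|n]; auto.
Qed.

Lemma meas_inter (A B : Omega P -> Prop) :
  meas P A -> meas P B -> meas P (fun w => A w /\ B w).
Proof.
  intros HA HB; apply (meas_ext (fun w => ~ (~ A w \/ ~ B w))).
  - intro w; destruct (classic (A w)); destruct (classic (B w)); tauto.
  - apply meas_compl, meas_union; apply meas_compl; auto.
Qed.

Lemma meas_forall_le (F : nat -> Omega P -> R) (c : R) (N : nat) :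
  (forall n, random_variable P (F n)) ->
  meas P (fun w => forall n, (1 <= n <= N)%nat -> F n w <= c).
Proof.
  intro HF; induction N as [|N IH].
  - apply (meas_ext (fun _ => True)); [intro; split; intros; lia || auto | apply meas_full].
  - apply (meas_ext (fun w => (forall n, (1 <= n <= N)%nat -> F n w <= c) /\ F (S N) w <= c)).
    + intro w; split.
      * intros [Hle HN] n Hn.
        destruct (Nat.eq_dec n (S N)) as [-> | Hne]; [exact HN | apply Hle; lia].
      * intro H; split; intros; apply H; lia.
    + apply meas_inter; [exact IH | apply HF].
Qed.

(* The empty event has probability 0: the partial sums (n+1) p of the
   constant series p, p, ... converge, which forces p = 0. *)
Lemma prob_empty : prob P (fun _ => False) = 0.
Proof.
  set (p := prob P (fun _ => False)).
  assert (Hsum : infinite_sum (fun _ => p) p).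
  { pose proof (prob_sigma_additive P (fun _ _ => False) (fun _ => meas_empty)
                  (fun _ _ _ _ f _ => f)) as H.
    cbv beta in H; now rewrite (prob_ext (fun w => exists _ : nat, False) (fun _ => False))
      in H by firstorder. }
  assert (Hpartial : forall n, sum_f_R0 (fun _ => p) n = INR (S n) * p).
  { induction n as [|n IH]; [simpl; ring | simpl sum_f_R0; rewrite IH, (S_INR (S n)); ring]. }
  assert (Hcv : Un_cv (fun n => INR (S n) * p) p).
  { apply (Un_cv_ext (sum_f_R0 (fun _ => p))); [exact Hpartial | exact Hsum]. }
  assert (Hnext : Un_cv (fun n => INR (S (S n)) * p) p).
  { intros eps Heps; destruct (Hcv eps Heps) as [N HN]; exists N; intros n Hn; apply HN; lia. }
  pose proof (CV_minus _ _ _ _ Hnext Hcv) as Hdiff.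
  symmetry; apply (cv_eventually_const _ O p (p - p)) in Hdiff; [lra |].
  intros n _; rewrite (S_INR (S n)); ring.
Qed.

(* Finite additivity for two disjoint events, from the sequence A, B, {}, {}, ... *)
Lemma prob_union_disjoint (A B : Omega P -> Prop) :
  meas P A -> meas P B -> (forall w, A w -> B w -> False) ->
  prob P (fun w => A w \/ B w) = prob P A + prob P B.
Proof.
  intros HA HB Hdisj.
  set (S := fun n : nat => match n with O => A | 1%nat => B | _ => fun _ => False end).
  assert (HS : forall n, meas P (S n)) by (intros [|[|n]]; simpl; auto using meas_empty).
  assert (HSdisj : forall i j w, i <> j -> S i w -> S j w -> False).
  { intros [|[|i]] [|[|j]] w Hij; simpl; try tauto; try lia; eauto. }
  pose proof (prob_sigma_additive P S HS HSdisj) as Hsum.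
  rewrite (prob_ext _ (fun w => A w \/ B w)) in Hsum.
  2: { intro w; split; [intros [[|[|n]] H]; simpl in H; tauto |
         intros [H | H]; [exists O | exists 1%nat]; exact H]. }
  apply (cv_eventually_const _ 1%nat _ _ Hsum).
  intros n Hn; induction n as [|n IH]; [lia |].
  destruct n as [|n]; [simpl; ring |].
  simpl sum_f_R0 in *; rewrite IH by lia; simpl; rewrite prob_empty; ring.
Qed.

Lemma prob_mono (A B : Omega P -> Prop) :
  meas P A -> meas P B -> (forall w, A w -> B w) -> prob P A <= prob P B.
Proof.
  intros HA HB Hsub.
  assert (HD : meas P (fun w => B w /\ ~ A w)) by (apply meas_inter, meas_compl; auto).
  rewrite (prob_ext B (fun w => A w \/ (B w /\ ~ A w))).
  - rewrite prob_union_disjoint by (auto; tauto).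
    pose proof (prob_nonneg P _ HD); lra.
  - intro w; destruct (classic (A w)); intuition.
Qed.

End Events.

Section RandomVariables.
Variable P : ProbSpace.

Lemma rv_ext (f g : Omega P -> R) :
  random_variable P f -> (forall w, f w = g w) -> random_variable P g.
Proof.
  intros Hf E t; apply (meas_ext P (fun w => f w <= t)); [intro w; rewrite E; tauto | apply Hf].
Qed.

(* {f < t} is the countable union of the events {f <= t - 1/(n+1)}. *)
Lemma rv_lt (f : Omega P -> R) (t : R) :
  random_variable P f -> meas P (fun w => f w < t).
Proof.
  intro Hf; apply (meas_ext P (fun w => exists n, f w <= t - / INR (S n))).
  - intro w; split.
    + intros [n Hn].
      assert (0 < / INR (S n)) by (apply Rinv_0_lt_compat, lt_0_INR; lia); lra.
    + intro Hlt; destruct (archimed_cor1 (t - f w)) as [N [HN HN0]]; [lra |].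
      exists (N - 1)%nat; replace (S (N - 1)) with N by lia; lra.
  - apply meas_countable_union; intro n; apply Hf.
Qed.

Lemma rv_gt (f : Omega P -> R) (t : R) :
  random_variable P f -> meas P (fun w => f w > t).
Proof. intro Hf; apply (meas_ext P (fun w => ~ f w <= t)); [intro; lra | apply meas_compl, Hf]. Qed.

Lemma rv_ge (f : Omega P -> R) (t : R) :
  random_variable P f -> meas P (fun w => f w >= t).
Proof.
  intro Hf; apply (meas_ext P (fun w => ~ f w < t)); [intro; lra | apply meas_compl, rv_lt, Hf].
Qed.

Lemma rv_const (c : R) : random_variable P (fun _ => c).
Proof.
  intro t; destruct (Rle_dec c t).
  - apply (meas_ext P (fun _ => True)); [tauto | apply meas_full].
  - apply (meas_ext P (fun _ => False)); [tauto | apply meas_empty].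
Qed.

Lemma rv_scal (a : R) (f : Omega P -> R) :
  random_variable P f -> random_variable P (fun w => a * f w).
Proof.
  intros Hf t; destruct (Rtotal_order a 0) as [Ha | [Ha | Ha]].
  - apply (meas_ext P (fun w => f w >= t / a)); [| apply rv_ge, Hf].
    intro w; assert (a * (t / a) = t) by (field; lra); split; intro; nra.
  - subst a; apply (rv_ext (fun _ => 0)); [apply rv_const | intro; ring].
  - apply (meas_ext P (fun w => f w <= t / a)); [| apply Hf].
    intro w; assert (a * (t / a) = t) by (field; lra); split; intro; nra.
Qed.

Lemma IZR_as_nat_diff (k : Z) : IZR k = INR (Z.to_nat k) - INR (Z.to_nat (- k)).
Proof.
  destruct k; simpl; [lra | rewrite INR_IPR; unfold IZR; lra | rewrite INR_IPR; unfold IZR; lra].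
Qed.

Lemma rational_grid_dense (a b : R) :
  a < b -> exists n m j : nat, a < (INR m - INR j) / INR (S n) < b.
Proof.
  intro Hab.
  destruct (archimed_cor1 (b - a)) as [N [HN HN0]]; [lra |].
  destruct (archimed (a * INR N)) as [Hup1 Hup2].
  exists (N - 1)%nat, (Z.to_nat (up (a * INR N))), (Z.to_nat (- up (a * INR N))).
  replace (S (N - 1)) with N by lia; rewrite <- IZR_as_nat_diff.
  assert (HNpos : 0 < INR N) by (apply lt_0_INR; lia).
  split.
  - apply Rmult_lt_reg_r with (INR N); [exact HNpos |].
    unfold Rdiv; rewrite Rmult_assoc, Rinv_l by lra; lra.
  - apply Rle_lt_trans with (a + / INR N); [| lra].
    apply Rmult_le_reg_r with (INR N); [exact HNpos |].
    unfold Rdiv; rewrite Rmult_assoc, Rinv_l, Rmult_plus_distr_r, Rinv_l by lra; lra.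
Qed.

(* {f + g > t} is the union over grid rationals q of {f > q} /\ {g > t - q}. *)
Lemma rv_plus (f g : Omega P -> R) :
  random_variable P f -> random_variable P g -> random_variable P (fun w => f w + g w).
Proof.
  intros Hf Hg t.
  set (q := fun n m j : nat => (INR m - INR j) / INR (S n)).
  apply (meas_ext P (fun w => ~ exists n m j, f w > q n m j /\ g w > t - q n m j)).
  - intro w; split.
    + intro Hnone; apply NNPP; intro Hgt; apply Hnone.
      destruct (rational_grid_dense (t - g w) (f w)) as [n [m [j Hq]]]; [lra |].
      exists n, m, j; unfold q; lra.
    + intros Hle [n [m [j [H1 H2]]]]; lra.
  - apply meas_compl.
    do 3 (apply meas_countable_union; intro).
    apply meas_inter; [apply rv_gt, Hf | apply rv_gt, Hg].
Qed.

End RandomVariables.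

(* The AR(2) recursion X_{m+1} = a1 X_m + a2 X_{m-1} + y_{m+1}, read off the
   pair recursion (for m = 0, X_{m-1} is X_0 = 0 by truncated subtraction). *)
Lemma ar2_S (a1 a2 : R) (y : nat -> R) (m : nat) :
  ar2 a1 a2 y (S m) = a1 * ar2 a1 a2 y m + a2 * ar2 a1 a2 y (m - 1) + y (S m).
Proof.
  assert (Hpair : forall n, ar2_pair a1 a2 y (S n) =
            (a1 * fst (ar2_pair a1 a2 y n) + a2 * snd (ar2_pair a1 a2 y n) + y (S n),
             fst (ar2_pair a1 a2 y n))).
  { intro n; simpl; destruct (ar2_pair a1 a2 y n); reflexivity. }
  assert (Hprev : snd (ar2_pair a1 a2 y m) = ar2 a1 a2 y (m - 1)).
  { destruct m as [|m]; [reflexivity |].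
    rewrite Hpair; simpl; unfold ar2; now rewrite Nat.sub_0_r. }
  unfold ar2 at 1; rewrite Hpair, Hprev; reflexivity.
Qed.

Lemma ar2_factor (a1 a2 s1 s2 : R) (y : nat -> R) (n : nat) :
  s1 + s2 = a1 -> s1 * s2 = - a2 -> (1 <= n)%nat ->
  ar2 a1 a2 y n - s2 * ar2 a1 a2 y (n - 1) =
  s1 * (ar2 a1 a2 y (n - 1) - s2 * ar2 a1 a2 y (n - 1 - 1)) + y n.
Proof.
  intros Hsum Hprod Hn; destruct n as [|m]; [lia |].
  replace (S m - 1)%nat with m by lia.
  rewrite ar2_S; replace a2 with (- (s1 * s2)) by lra; rewrite <- Hsum; ring.
Qed.

Lemma ar2_random_variable (P : ProbSpace) (Y : nat -> Omega P -> R) (a1 a2 : R) :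
  (forall k, (1 <= k)%nat -> random_variable P (Y k)) ->
  forall n, random_variable P (fun w => ar2 a1 a2 (fun k => Y k w) n).
Proof.
  intros HY.
  assert (Hpair : forall n, random_variable P (fun w => ar2 a1 a2 (fun k => Y k w) n) /\
                            random_variable P (fun w => ar2 a1 a2 (fun k => Y k w) (S n))).
  { induction n as [|n [IHn IHSn]].
    - split; [exact (rv_const P 0) |].
      apply (rv_ext P (Y 1%nat)); [apply HY; lia | intro w; unfold ar2; simpl; ring].
    - split; [exact IHSn |].
      apply (rv_ext P (fun w => a1 * ar2 a1 a2 (fun k => Y k w) (S n)
                             + a2 * ar2 a1 a2 (fun k => Y k w) n + Y (S (S n)) w)).
      + apply rv_plus; [apply rv_plus; apply rv_scal; assumption | apply HY; lia].
      + intro w; rewrite (ar2_S a1 a2 _ (S n)); simpl; now rewrite Nat.sub_0_r. }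
  intro n; apply Hpair.
Qed.

Lemma shifted_difference_bound (u : nat -> R) (s2 x : R) (N : nat) :
  s2 <= 0 -> 0 <= x -> u O = 0 ->
  (forall n, (1 <= n <= N)%nat -> u n <= x) ->
  forall n, (1 <= n <= N)%nat -> u n - s2 * u (n - 1)%nat <= (1 - s2) * x.
Proof.
  intros Hs2 Hx Hu0 Hbound n Hn.
  assert (Hcur : u n <= x) by auto.
  assert (Hprev : u (n - 1)%nat <= x).
  { destruct (Nat.eq_dec n 1) as [-> | Hne]; [simpl; lra | apply Hbound; lia]. }
  nra.
Qed.

(* Roots of the characteristic polynomial t^2 - a1 t - a2 (real when
   a1^2 + 4 a2 >= 0): the smaller one s2 and the larger one s1. *)
Definition char_root_lo (a1 a2 : R) : R := (a1 - sqrt (a1 ^ 2 + 4 * a2)) / 2.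
Definition char_root_hi (a1 a2 : R) : R := (a1 + sqrt (a1 ^ 2 + 4 * a2)) / 2.

Lemma char_roots_vieta (a1 a2 : R) :
  a1 ^ 2 + 4 * a2 >= 0 ->
  char_root_hi a1 a2 + char_root_lo a1 a2 = a1 /\
  char_root_hi a1 a2 * char_root_lo a1 a2 = - a2.
Proof.
  intro HD; unfold char_root_hi, char_root_lo.
  assert (Hr2 : sqrt (a1 ^ 2 + 4 * a2) * sqrt (a1 ^ 2 + 4 * a2) = a1 ^ 2 + 4 * a2)
    by (apply sqrt_sqrt; lra).
  split; [field | nra].
Qed.

Lemma char_roots_region (a1 a2 : R) :
  a1 ^ 2 + 4 * a2 > 0 ->
  ((a1 < 0 /\ a2 < 0) \/ (a2 > 0 /\ a1 + a2 < 1)) ->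
  char_root_lo a1 a2 < 0 /\ char_root_hi a1 a2 < 1.
Proof.
  intros HD Hreg; unfold char_root_lo, char_root_hi.
  set (r := sqrt (a1 ^ 2 + 4 * a2)).
  assert (Hr0 : 0 < r) by (apply sqrt_lt_R0; lra).
  assert (Hr2 : r * r = a1 ^ 2 + 4 * a2) by (apply sqrt_sqrt; lra).
  destruct Hreg as [[H1 H2] | [H1 H2]].
  - assert (r < - a1) by nra; split; lra.
  - assert (- a1 < r /\ a1 < r) by (split; nra).
    assert (r < 2 - a1) by nra; split; lra.
Qed.

Theorem mainTheorem11 (P : ProbSpace) (Y : nat -> Omega P -> R) (a1 a2 : R) :
  iid_nondegenerate P Y ->
  a1 ^ 2 + 4 * a2 > 0 ->
  ((a1 < 0 /\ a2 < 0) \/ (a2 > 0 /\ a1 + a2 < 1)) ->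
  let s2 := (a1 - sqrt (a1 ^ 2 + 4 * a2)) / 2 in
  let X := fun (n : nat) (w : Omega P) => ar2 a1 a2 (fun k => Y k w) n in
  let Z := fun (n : nat) (w : Omega P) => X n w - s2 * X (n - 1)%nat w in
  s2 < 0 /\
  - a2 / s2 < 1 /\
  (forall (n : nat) (w : Omega P), (1 <= n)%nat ->
      Z n w = (- a2 / s2) * Z (n - 1)%nat w + Y n w) /\
  (forall (x : R) (N : nat), 0 <= x -> (1 <= N)%nat ->
      prob P (fun w => forall n, (1 <= n <= N)%nat -> X n w <= x)
      <= prob P (fun w => forall n, (1 <= n <= N)%nat -> Z n w <= (1 - s2) * x)).
Proof.
  intros [HY _] HD Hreg s2 X Z.
  change s2 with (char_root_lo a1 a2) in *.
  destruct (char_roots_vieta a1 a2) as [Hsum Hprod]; [lra |].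
  destruct (char_roots_region a1 a2 HD Hreg) as [Hs2 Hs1].
  assert (Hratio : - a2 / char_root_lo a1 a2 = char_root_hi a1 a2)
    by (rewrite <- Hprod; field; lra).
  rewrite Hratio.
  assert (HX : forall n, random_variable P (X n)) by (apply ar2_random_variable, HY).
  repeat split; [exact Hs2 | exact Hs1 | |].
  - intros n w Hn; exact (ar2_factor a1 a2 _ _ (fun k => Y k w) n Hsum Hprod Hn).
  - intros x N Hx _.
    apply prob_mono; [apply meas_forall_le; exact HX | apply meas_forall_le |].
    + intro n; apply (rv_ext P (fun w => X n w + (- char_root_lo a1 a2) * X (n - 1)%nat w)).
      * apply rv_plus; [apply HX | apply rv_scal, HX].
      * intro w; unfold Z; ring.
    + intros w Hbound; apply (shifted_difference_bound (fun n => X n w)); auto; lra.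
Qed.
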